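(* Let $G$ and $H$ be finite simple graphs such that $\delta(G)\le\delta(H)$. Let $S$ be a minimum edge-cut in $G\times H$ and let $B,W$ be the connected components of $(G\times H)-S$. If $|S|<\delta(G\times H)$, then for every $(x,y)\in V(G\times H)$ either $N_G(x)\times\{y\}\subseteq B$ or $N_G(x)\times\{y\}\subseteq W$.
   Context: The direct product $G\times H$ has vertex set $V(G)\times V(H)$, with $(x_1,y_1)$ adjacent to $(x_2,y_2)$ if and only if $x_1x_2\in E(G)$ and $y_1y_2\in E(H)$. $\delta(F)$ denotes the minimum degree of a graph $F$, and $N_G(x)$ the open neighbourhood of $x$ in $G$. A minimum edge-cut is an edge set of minimum size whose removal disconnects the graph; $B$ and $W$ denote the two connected components of $(G\times H)-S$. *)

From mathcomp Require Import all_boot.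
Set Implicit Arguments. Unset Strict Implicit. Unset Printing Implicit Defensive.

Definition simple_graph (T : finType) (e : rel T) : Prop :=
  symmetric e /\ irreflexive e.

Definition nbhd (T : finType) (e : rel T) (x : T) : {set T} := [set y | e x y].

(* minimum degree delta(F); the default #|T| only matters when T is empty
   (then delta = 0 = #|T|), since every degree is < #|T| *)
Definition mindeg (T : finType) (e : rel T) : nat :=
  \big[minn/#|T|]_(v : T) #|nbhd e v|.

Definition dprod_rel (T1 T2 : finType) (e1 : rel T1) (e2 : rel T2) : rel (T1 * T2) :=
  fun p q => e1 p.1 q.1 && e2 p.2 q.2.

Definition edges (T : finType) (e : rel T) : {set {set T}} :=
  [set [set p.1; p.2] | p in [set p : T * T | e p.1 p.2]].

Definition del_edges (T : finType) (e : rel T) (S : {set {set T}}) : rel T :=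
  fun u v => e u v && ([set u; v] \notin S).

Definition disconnected (T : finType) (e : rel T) : Prop :=
  exists u v : T, ~~ connect e u v.

Definition edge_cut (T : finType) (e : rel T) (S : {set {set T}}) : Prop :=
  S \subset edges e /\ disconnected (del_edges e S).

Definition min_edge_cut (T : finType) (e : rel T) (S : {set {set T}}) : Prop :=
  edge_cut e S /\ forall S', edge_cut e S' -> #|S| <= #|S'|.

Definition component (T : finType) (e : rel T) (C : {set T}) : Prop :=
  exists2 x, x \in C & C = [set y | connect e x y].

From mathcomp Require Import all_boot.
Set Implicit Arguments. Unset Strict Implicit. Unset Printing Implicit Defensive.

(* Suppose [x1, x2 ∈ N_G(x)] with [(x1, y)] and [(x2, y)] on different sides of
   the cut. For every [q ∈ N_H(y)] and every [k < δ(G)] there is a short walk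
   in [G × H] between two vertices on different sides, and these
   [δ(G) · deg_H(y)] walks are pairwise edge-disjoint. Each of them crosses
   the cut, so [|S| ≥ δ(G) δ(H) ≥ δ(G × H)]. *)

Lemma set2_inv (T : finType) (a b a' b' : T) :
  [set a; b] = [set a'; b'] -> (a = a' /\ b = b') \/ (a = b' /\ b = a').
Proof.
move=> E.
have : a \in [set a'; b'] by rewrite -E set21.
have : b \in [set a'; b'] by rewrite -E set22.
have : a' \in [set a; b] by rewrite E set21.
have : b' \in [set a; b] by rewrite E set22.
rewrite !inE.
by case/orP=> /eqP eb'; case/orP=> /eqP ea'; case/orP=> /eqP eb; case/orP=> /eqP ea;
  subst; auto.
Qed.

Lemma has_colour_change (T : Type) (c : T -> bool) (h : T) (t : seq T) :
  c h != c (last h t) -> has (fun e => c e.1 != c e.2) (zip (h :: t) t).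
Proof.
elim: t h => [|h' t IHt] h /=; first by rewrite eqxx.
by case: (c h =P c h') => [-> /IHt ->|].
Qed.

Lemma nth_enum_setD1 (T : finType) (A : {set T}) (a a0 : T) (d k : nat) :
  a \in A -> d <= #|A| -> 0 < k < d ->
  nth a0 (enum (A :\ a)) k.-1 \in A :\ a /\
  index (nth a0 (enum (A :\ a)) k.-1) (enum (A :\ a)) = k.-1.
Proof.
move=> Aa dA /andP[k_gt0 k_lt_d]; set s := enum _.
have lt_k_s : k.-1 < size s.
  rewrite -cardE (cardsD1 a A) Aa add1n in dA *.
  by rewrite -ltnS prednK // (leq_trans k_lt_d).
by rewrite -mem_enum mem_nth // index_uniq // enum_uniq.
Qed.

Section MinimumDegree.
Variables (T : finType) (e : rel T).

Lemma mindeg_le v : mindeg e <= #|nbhd e v|.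
Proof.
rewrite /mindeg; elim: (index_enum T) (mem_index_enum v) => //= u s IHs.
rewrite inE big_cons => /predU1P[<-|/IHs]; first exact: geq_minl.
exact/leq_trans/geq_minr.
Qed.

Lemma mindeg_attained (v0 : T) : exists v, #|nbhd e v| = mindeg e.
Proof.
have [v _ v_min] := @arg_minnP T v0 xpredT (fun v => #|nbhd e v|) isT.
exists v; apply/eqP; rewrite eqn_leq mindeg_le andbT.
by apply: (big_ind (leq _)) => // [|m n]; [exact: max_card|rewrite leq_min => ->].
Qed.

Lemma mindeg_le_card : mindeg e <= #|T|.
Proof.
apply: (big_ind (fun m => m <= #|T|)) => // [m n le_m _|v _]; last exact: max_card.
by rewrite geq_min le_m.
Qed.

End MinimumDegree.

Lemma nbhd_dprod (T1 T2 : finType) (G : rel T1) (H : rel T2) (v : T1) (w : T2) :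
  nbhd (dprod_rel G H) (v, w) = setX (nbhd G v) (nbhd H w).
Proof. by apply/setP => -[a b]; rewrite !inE. Qed.

Lemma mindeg_dprod (T1 T2 : finType) (G : rel T1) (H : rel T2) :
  mindeg (dprod_rel G H) <= mindeg G * mindeg H.
Proof.
case: (pickP (@predT T1)) => [v0 _|T1_0]; last first.
  by apply: leq_trans (mindeg_le_card _) _; rewrite card_prod (eq_card0 T1_0).
case: (pickP (@predT T2)) => [w0 _|T2_0]; last first.
  by apply: leq_trans (mindeg_le_card _) _; rewrite card_prod (eq_card0 T2_0) muln0.
have [v <-] := mindeg_attained G v0; have [w <-] := mindeg_attained H w0.
by rewrite -cardsX -nbhd_dprod mindeg_le.
Qed.

Definition crossing_edges (T : finType) (e : rel T) (c : T -> bool) : {set {set T}} :=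
  [set [set p.1; p.2] | p in [set p : T * T | e p.1 p.2 && (c p.1 != c p.2)]].

Lemma crossing_edge_in_cut (T : finType) (e : rel T) (S : {set {set T}})
    (B : {set T}) (u v : T) :
  symmetric e -> component (del_edges e S) B ->
  e u v -> (u \in B) != (v \in B) -> [set u; v] \in S.
Proof.
move=> sym_e [b _ ->]; wlog Bu : u v / connect (del_edges e S) b u.
  move=> wlog_cut uv.
  have [Bu|nBu] := boolP (connect (del_edges e S) b u); first exact: wlog_cut.
  rewrite setUC eq_sym => neq; apply: (wlog_cut v u _ _ neq); last by rewrite sym_e.
  by move: neq; rewrite !inE (negbTE nBu); case: connect.
rewrite !inE Bu => uv; apply: contraR => uv_S.
by apply: connect_trans Bu (connect1 _); rewrite /del_edges uv.
Qed.

Section DisjointCrossingWalks.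
Variables (T1 T2 : finType) (G : rel T1) (H : rel T2).
Hypotheses (symG : symmetric G) (irrG : irreflexive G).
Hypotheses (symH : symmetric H) (irrH : irreflexive H).
Variable c : T1 * T2 -> bool.
Variables (x x1 x2 : T1) (y : T2) (d : nat).
Hypotheses (Gxx1 : G x x1) (Gxx2 : G x x2) (c_x1x2 : c (x1, y) != c (x2, y)).
Hypotheses (d_x1 : d <= #|nbhd G x1|) (d_x2 : d <= #|nbhd G x2|).
Hypothesis d_nbhd_y : forall q, H y q -> d <= #|nbhd H q|.

Local Notation GxH := (dprod_rel G H).

Lemma G_neq v w : G v w -> (w == v) = false.
Proof. by apply: contraTF => /eqP->; rewrite irrG. Qed.

Lemma H_neq v w : H v w -> (w == v) = false.
Proof. by apply: contraTF => /eqP->; rewrite irrH. Qed.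

(* The walks for [q] start at [(start q, y)], where [start q] is the one of
   [x1], [x2] whose colour differs from that of [(x, q)]. *)
Definition start q := if c (x, q) != c (x1, y) then x1 else x2.
Definition other q := if c (x, q) != c (x1, y) then x2 else x1.

Lemma c_start_x q : c (start q, y) != c (x, q).
Proof. by rewrite /start eq_sym; case: ifP => // /negbFE/eqP->. Qed.

Lemma c_start_other q : c (start q, y) != c (other q, y).
Proof. by rewrite /start /other; case: ifP => _ //; rewrite eq_sym. Qed.

Lemma G_x_start q : G x (start q). Proof. by rewrite /start; case: ifP. Qed.
Lemma G_x_other q : G x (other q). Proof. by rewrite /other; case: ifP. Qed.

Lemma mem_x12 q v : (v \in [:: x1; x2]) = (v == start q) || (v == other q).
Proof. by rewrite !inE /start /other; case: ifP => _ //; rewrite orbC. Qed.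

Definition nbrs_G v := enum (nbhd G v :\ x).
Definition nbrs_H q := enum (nbhd H q :\ y).
Definition step_G q k := nth x (nbrs_G (start q)) k.-1.
Definition step_H q k := nth y (nbrs_H q) k.-1.

Lemma step_G_spec q k : 0 < k < d ->
  step_G q k \in nbhd G (start q) :\ x /\ index (step_G q k) (nbrs_G (start q)) = k.-1.
Proof.
apply: nth_enum_setD1; first by rewrite inE symG G_x_start.
by rewrite /start; case: ifP.
Qed.

Lemma step_H_spec q k : H y q -> 0 < k < d ->
  step_H q k \in nbhd H q :\ y /\ index (step_H q k) (nbrs_H q) = k.-1.
Proof. by move=> Hyq; apply: nth_enum_setD1; [rewrite inE symH | exact: d_nbhd_y]. Qed.

(* The vertices after [(start q, y)] of the [k]-th walk for [q]; it uses the
   [k]-th neighbours of [start q] and of [q], other than [x] and [y]. *)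
Definition walk q k : seq (T1 * T2) :=
  if k == 0 then [:: (x, q)]
  else if step_G q k == other q then [:: (other q, q); (x, y); (start q, q); (other q, y)]
  else [:: (step_G q k, q); (start q, step_H q k); (x, q)].

Definition walk_edges q k := zip ((start q, y) :: walk q k) (walk q k).

Lemma walk_edgesP q k :
  H y q -> k < d -> all (fun e => GxH e.1 e.2) (walk_edges q k).
Proof.
move=> Hyq lt_k_d; rewrite /walk_edges /walk /dprod_rel.
have [_|k_gt0] /= := posnP k; first by rewrite symG G_x_start Hyq.
have hk : 0 < k < d by rewrite k_gt0.
have [+ _] := step_G_spec q hk; rewrite !inE => /andP[_ G_step].
case: eqP => [step_other|_] /=.
  by rewrite -step_other G_step Hyq symG step_other G_x_other symH Hyq G_x_start.
have [+ _] := step_H_spec Hyq hk; rewrite !inE => /andP[_ H_step].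
by rewrite G_step Hyq symG G_step H_step symG G_x_start symH H_step.
Qed.

Lemma walk_edges_cross q k : has (fun e => c e.1 != c e.2) (walk_edges q k).
Proof.
apply: has_colour_change; rewrite /walk.
case: ifP => _ /=; first exact: c_start_x.
by case: ifP => _ /=; [exact: c_start_other | exact: c_start_x].
Qed.

Definition index_other q := (index (other q) (nbrs_G (start q))).+1.

(* [walk_index] recovers [(q, k)] from either orientation of every edge of
   [walk q k]: this is what makes the walks pairwise edge-disjoint. *)
Definition walk_index_at_x (w hx : T2) : T2 * nat :=
  if hx == y then (w, index_other w) else if w == y then (hx, 0)
  else (hx, (index w (nbrs_H hx)).+1).

Definition walk_index (v w : T1 * T2) : T2 * nat :=
  if v.1 == x then walk_index_at_x w.2 v.2
  else if w.1 == x then walk_index_at_x v.2 w.2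
  else if (v.1 \in [:: x1; x2]) && (w.1 \in [:: x1; x2]) then
    let q := if v.2 == y then w.2 else v.2 in (q, index_other q)
  else if v.1 \in [:: x1; x2] then (w.2, (index w.1 (nbrs_G v.1)).+1)
  else (v.2, (index v.1 (nbrs_G w.1)).+1).

Lemma walk_indexK q k e : H y q -> k < d -> e \in walk_edges q k ->
  walk_index e.1 e.2 = (q, k) /\ walk_index e.2 e.1 = (q, k).
Proof.
move=> Hyq lt_k_d; rewrite /walk_edges /walk.
have q_y : (q == y) = false by rewrite H_neq.
have start_x12 := mem_x12 q (start q); have other_x12 := mem_x12 q (other q).
rewrite eqxx /= in start_x12; rewrite eqxx orbT in other_x12.
have start_x := G_neq (G_x_start q); have other_x := G_neq (G_x_other q).
have [->|k_gt0] /= := posnP k.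
  by rewrite inE => /eqP-> /=; rewrite /walk_index /walk_index_at_x /= start_x q_y !eqxx.
have hk : 0 < k < d by rewrite k_gt0.
have [+ step_G_idx] := step_G_spec q hk; rewrite !inE => /andP[step_G_x G_step].
have k_of_step_G : (index (step_G q k) (nbrs_G (start q))).+1 = k.
  by rewrite step_G_idx prednK.
case: eqP => [step_other|/eqP step_not_other] /=.
  have index_other_q : index_other q = k by rewrite /index_other -step_other k_of_step_G.
  by rewrite !inE => /or4P[]/eqP-> /=; rewrite /walk_index /walk_index_at_x /=
    ?start_x ?other_x ?q_y ?start_x12 ?other_x12 ?eqxx /= ?index_other_q.
have step_G_x12 : (step_G q k \in [:: x1; x2]) = false.
  by rewrite (mem_x12 q) (negbTE step_not_other) (G_neq G_step).
have [+ step_H_idx] := step_H_spec Hyq hk; rewrite !inE => /andP[step_H_y _].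
have k_of_step_H : (index (step_H q k) (nbrs_H q)).+1 = k by rewrite step_H_idx prednK.
by move=> /or3P[]/eqP-> /=; rewrite /walk_index /walk_index_at_x /=
  ?start_x ?(negbTE step_G_x) ?q_y ?start_x12 ?step_G_x12 ?(negbTE step_H_y)
  ?k_of_step_G ?k_of_step_H ?eqxx //.
Qed.

Definition crossing (e : (T1 * T2) * (T1 * T2)) := c e.1 != c e.2.

Definition crossing_step (i : T2 * 'I_d) : (T1 * T2) * (T1 * T2) :=
  let E := walk_edges i.1 i.2 in nth ((x, y), (x, y)) E (find crossing E).

Definition walk_indices : {set T2 * 'I_d} := setX (nbhd H y) [set: 'I_d].

Lemma crossing_stepP i : i \in walk_indices ->
  crossing_step i \in walk_edges i.1 i.2 /\ crossing (crossing_step i).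
Proof.
case: i => q k; rewrite !inE andbT /= => Hyq.
have has_crossing := walk_edges_cross q k.
by split; [apply: mem_nth; rewrite -has_find | apply: nth_find].
Qed.

Lemma crossing_step_inj :
  {in walk_indices &,
    injective (fun i => [set (crossing_step i).1; (crossing_step i).2])}.
Proof.
move=> [q k] [q' k'] i_idx i'_idx /set2_inv.
have [+ _] := crossing_stepP i_idx; have [+ _] := crossing_stepP i'_idx.
move: i_idx i'_idx; rewrite !inE !andbT /= => Hyq Hyq'.
move=> /(walk_indexK Hyq' (ltn_ord k'))[idx' idx'_sym].
move=> /(walk_indexK Hyq (ltn_ord k))[idx _].
by case=> -[e1 e2]; move: idx; rewrite e1 e2 ?idx' ?idx'_sym => -[-> /val_inj->].
Qed.

Lemma card_crossing_edges :
  d * #|nbhd H y| <= #|crossing_edges GxH c|.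
Proof.
rewrite -[d in d * _]card_ord -cardsT mulnC -cardsX -(card_in_imset crossing_step_inj).
apply/subset_leq_card/subsetP => _ /imsetP[i i_idx ->].
have [walk_i cross_i] := crossing_stepP i_idx.
have Hyq : H y i.1 by move: i_idx; rewrite !inE andbT.
apply/imsetP; exists (crossing_step i) => //.
by rewrite inE (allP (walk_edgesP Hyq (ltn_ord i.2))).
Qed.

End DisjointCrossingWalks.

Lemma crossing_edges_sub_cut (T : finType) (e : rel T) (S : {set {set T}}) (B : {set T}) :
  symmetric e -> component (del_edges e S) B ->
  crossing_edges e (fun v => v \in B) \subset S.
Proof.
move=> sym_e B_comp; apply/subsetP => _ /imsetP[[u v] + ->].
by rewrite inE /= => /andP[uv]; exact: crossing_edge_in_cut.
Qed.

Theorem lemma2p3 (T1 T2 : finType) (G : rel T1) (H : rel T2)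
  (S : {set {set (T1 * T2)}}) (B W : {set (T1 * T2)}) :
  simple_graph G -> simple_graph H ->
  mindeg G <= mindeg H ->
  min_edge_cut (dprod_rel G H) S ->
  component (del_edges (dprod_rel G H) S) B ->
  component (del_edges (dprod_rel G H) S) W ->
  B != W ->
  B :|: W = [set: T1 * T2] ->
  #|S| < mindeg (dprod_rel G H) ->
  forall (x : T1) (y : T2),
    [set (x', y) | x' in nbhd G x] \subset B \/
    [set (x', y) | x' in nbhd G x] \subset W.
Proof.
move=> [symG irrG] [symH irrH] le_GH _ B_comp _ _ BW lt_S_GH x y.
have [|/subsetPn[_ /imsetP[x1 /[!inE] Gxx1 ->] x1_B]] := boolP (_ \subset B).
  by left.
have [|/subsetPn[_ /imsetP[x2 /[!inE] Gxx2 ->] x2_W]] := boolP (_ \subset W).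
  by right.
have x2_B : (x2, y) \in B.
  by move: (in_setT (x2, y)); rewrite -BW inE (negbTE x2_W) orbF.
have sym_GH : symmetric (dprod_rel G H) by move=> u v; rewrite /dprod_rel symG symH.
have d_nbhd q : H y q -> mindeg G <= #|nbhd H q|.
  by move=> _; exact: leq_trans le_GH (mindeg_le H q).
exfalso; move: lt_S_GH; apply/negP; rewrite -leqNgt.
apply: leq_trans (mindeg_dprod G H) _.
apply: leq_trans (leq_mul (leqnn _) (mindeg_le H y)) _.
apply: leq_trans (card_crossing_edges (c := fun v => v \in B) symG irrG symH irrH
  Gxx1 Gxx2 _ _ _ d_nbhd) _.
- by rewrite x2_B (negbTE x1_B).
- exact: mindeg_le.
- exact: mindeg_le.
exact/subset_leq_card/crossing_edges_sub_cut.
Qed.
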